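(* Let $G$ be a word-hyperbolic group with a marked finite generating set $A$, let $H\le G$ be a quasiconvex subgroup, and let $Y=\Gamma(G/H,A)$ with its simplicial metric $d_Y$. Then there exists $\delta'\ge 0$ such that every geodesic bigon in $(Y,d_Y)$ is $\delta'$-thin, i.e. whenever $\alpha,\beta$ are geodesic segments in $Y$ with the same endpoints, $\alpha$ lies in the closed $\delta'$-neighborhood of $\beta$ and $\beta$ lies in the closed $\delta'$-neighborhood of $\alpha$.
   Context: A marked finite generating set of $G$ is a map $\pi:A\to G$ from a finite alphabet $A$ such that $\pi(A)$ generates $G$ (non-injective $\pi$ and $1\in\pi(A)$ allowed). The relative Cayley graph $\Gamma(G/H,A)$ has vertex set the right cosets $Hg$ ($g\in G$) and, for each $(Hg,a)\in G/H\times A$, an edge from $Hg$ to $Hg\pi(a)$ labeled $a$; all edges have length one. $H$ quasiconvex means there is $C>0$ such that every geodesic in the Cayley graph $\Gamma(G,A)$ with endpoints in $H$ lies in the $C$-neighborhood of $H$. *)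

From Stdlib Require Import Reals Lra List ClassicalEpsilon ClassicalDescription.
Open Scope R_scope.

Record Group := {
  gcar :> Type;
  gmul : gcar -> gcar -> gcar;
  gone : gcar;
  ginv : gcar -> gcar;
  gmulA : forall x y z, gmul x (gmul y z) = gmul (gmul x y) z;
  gmul1 : forall x, gmul gone x = x;
  gmulV : forall x, gmul (ginv x) x = gone }.

Arguments gmul {g}. Arguments gone {g}. Arguments ginv {g}.

Definition is_subgroup (G : Group) (H : G -> Prop) : Prop :=
  H gone /\ (forall x y, H x -> H y -> H (gmul x y)) /\ (forall x, H x -> H (ginv x)).

Definition finite_type (A : Type) : Prop := exists l : list A, forall a, In a l.

(* a letter (a, true) stands for pi a, (a, false) for (pi a)^-1 *)
Definition word (A : Type) := list (A * bool).

Definition letter_val {G : Group} {A : Type} (pi : A -> G) (l : A * bool) : G :=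
  if snd l then pi (fst l) else ginv (pi (fst l)).

Definition eval {G : Group} {A : Type} (pi : A -> G) (w : word A) : G :=
  fold_right (fun l acc => gmul (letter_val pi l) acc) gone w.

Definition generates {G : Group} {A : Type} (pi : A -> G) : Prop :=
  forall g : G, exists w : word A, eval pi w = g.

(* least natural number satisfying P (meaningful when P is inhabited) *)
Definition least (P : nat -> Prop) : nat :=
  epsilon (inhabits 0%nat) (fun n => P n /\ forall m, P m -> (n <= m)%nat).

Definition wdist {G : Group} {A : Type} (pi : A -> G) (x y : G) : nat :=
  least (fun n => exists w : word A, length w = n /\ gmul x (eval pi w) = y).

Definition gromov_prod {G : Group} {A : Type} (pi : A -> G) (x y w : G) : R :=
  (INR (wdist pi x w) + INR (wdist pi y w) - INR (wdist pi x y)) / 2.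

Definition word_hyperbolic {G : Group} {A : Type} (pi : A -> G) : Prop :=
  exists delta : R, forall x y z w : G,
    gromov_prod pi x y w >= Rmin (gromov_prod pi x z w) (gromov_prod pi z y w) - delta.

Definition quasiconvex {G : Group} {A : Type} (pi : A -> G) (H : G -> Prop) : Prop :=
  exists C : R, C > 0 /\
    forall (h1 h2 : G) (w : word A), H h1 -> H h2 ->
      gmul h1 (eval pi w) = h2 -> length w = wdist pi h1 h2 ->
      forall i : nat, (i <= length w)%nat ->
        exists h : G, H h /\ INR (wdist pi (gmul h1 (eval pi (firstn i w))) h) <= C.

(* Points of Y: a vertex Hg (represented by g), or an interior point at
   parameter t in (0,1) of the edge (Hg, a) from Hg to Hg pi(a). *)
Inductive YPt (G : Group) (A : Type) : Type :=
  | YV : G -> YPt G A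
  | YE : G -> A -> {t : R | 0 < t < 1} -> YPt G A.
Arguments YV {G A}. Arguments YE {G A}.

Definition same_coset {G : Group} (H : G -> Prop) (x y : G) : Prop := H (gmul x (ginv y)).

Definition vdistY {G : Group} {A : Type} (pi : A -> G) (H : G -> Prop) (x y : G) : nat :=
  least (fun n => exists w : word A, length w = n /\ same_coset H (gmul x (eval pi w)) y).

(* the two endpoints of the (closed) cell containing a point, with the
   distance from the point to each of them *)
Definition ends {G : Group} {A : Type} (pi : A -> G) (p : YPt G A) : (G * R) * (G * R) :=
  match p with
  | YV g => ((g, 0), (g, 0))
  | YE g a t => ((g, proj1_sig t), (gmul g (pi a), 1 - proj1_sig t))
  end.

Definition route {G : Group} {A : Type} (pi : A -> G) (H : G -> Prop)
  (e f : G * R) : R := snd e + INR (vdistY pi H (fst e) (fst f)) + snd f.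

(* length of the shortest path leaving the cell of p through a vertex *)
Definition vertex_route {G : Group} {A : Type} (pi : A -> G) (H : G -> Prop)
  (p q : YPt G A) : R :=
  let (e1, e2) := ends pi p in
  let (f1, f2) := ends pi q in
  Rmin (Rmin (route pi H e1 f1) (route pi H e1 f2))
       (Rmin (route pi H e2 f1) (route pi H e2 f2)).

Definition same_edge {G : Group} {A : Type} (H : G -> Prop) (p q : YPt G A) : Prop :=
  match p, q with
  | YE g a _, YE g' a' _ => a = a' /\ same_coset H g g'
  | _, _ => False
  end.

Definition param {G : Group} {A : Type} (p : YPt G A) : R :=
  match p with YE _ _ t => proj1_sig t | YV _ => 0 end.

Definition dY {G : Group} {A : Type} (pi : A -> G) (H : G -> Prop) (p q : YPt G A) : R :=
  if excluded_middle_informative (same_edge H p q)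
  then Rmin (vertex_route pi H p q) (Rabs (param p - param q))
  else vertex_route pi H p q.

Definition geodesic_segment {G : Group} {A : Type} (pi : A -> G) (H : G -> Prop)
  (gam : R -> YPt G A) (L : R) : Prop :=
  0 <= L /\ forall s t, 0 <= s <= L -> 0 <= t <= L ->
    dY pi H (gam s) (gam t) = Rabs (s - t).

Definition in_nbhd {G : Group} {A : Type} (pi : A -> G) (H : G -> Prop)
  (delta : R) (alpha : R -> YPt G A) (L : R) (beta : R -> YPt G A) (M : R) : Prop :=
  forall s, 0 <= s <= L -> exists t, 0 <= t <= M /\ dY pi H (alpha s) (beta t) <= delta.

(* Vertices of Y are the cosets Hg, and d_Y differs by at most 2 from the distance between
   the cosets of the cells involved; that distance is realised by points of G. The two sides of
   a bigon therefore lift to near-geodesics in G from a common point x to two points y and k y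
   of one coset, with k in H. If p is a point of H nearest to y, then k p is nearest to k y, and
   by quasiconvexity the geodesics from y to k p and from k y to p pass near p and k p. The
   four-point condition then shows that a point m on the first lift is close to the
   corresponding point m' of the second, or to k^-1 m', or that m and m' both lie near a
   geodesic [p, k p], hence near H. In each case the cosets Hm and Hm' are boundedly close. *)

From Stdlib Require Import Reals Lra Lia List Wf_nat.
From Stdlib Require Import Classical ClassicalEpsilon ClassicalDescription.
Open Scope R_scope.

Section GroupLaws.
Variable G : Group.

Lemma gmulrV (x : G) : gmul x (ginv x) = gone.
Proof.
  rewrite <- (gmul1 _ (gmul x (ginv x))), <- (gmulV _ (ginv x)) at 1.
  rewrite <- gmulA, (gmulA _ (ginv x) x (ginv x)), gmulV, gmul1.
  apply gmulV.
Qed.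

Lemma gmul1r (x : G) : gmul x gone = x.
Proof. rewrite <- (gmulV _ x), gmulA, gmulrV. apply gmul1. Qed.

Lemma gmul_cancel (k x y : G) : gmul k x = gmul k y -> x = y.
Proof.
  intro E. rewrite <- (gmul1 _ x), <- (gmul1 _ y), <- (gmulV _ k), <- !gmulA, E.
  reflexivity.
Qed.

Lemma gmulK (k x : G) : gmul (ginv k) (gmul k x) = x.
Proof. rewrite gmulA, gmulV. apply gmul1. Qed.

Lemma gmulKV (k x : G) : gmul k (gmul (ginv k) x) = x.
Proof. rewrite gmulA, gmulrV. apply gmul1. Qed.

Lemma ginv_mul (x y : G) : ginv (gmul x y) = gmul (ginv y) (ginv x).
Proof.
  apply (gmul_cancel (gmul x y)).
  rewrite gmulrV, <- gmulA, gmulKV, gmulrV. reflexivity.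
Qed.

Lemma ginv_inv (x : G) : ginv (ginv x) = x.
Proof. apply (gmul_cancel (ginv x)). rewrite gmulrV, gmulV. reflexivity. Qed.

End GroupLaws.

Lemma least_exists (P : nat -> Prop) :
  (exists n, P n) -> exists n, P n /\ forall m, P m -> (n <= m)%nat.
Proof.
  intro inhabited.
  destruct (dec_inh_nat_subset_has_unique_least_element P (fun n => classic (P n)) inhabited)
    as [n [Hn _]].
  exists n. exact Hn.
Qed.

Lemma least_spec (P : nat -> Prop) :
  (exists n, P n) -> P (least P) /\ forall m, P m -> (least P <= m)%nat.
Proof.
  intro inhabited. unfold least.
  apply (epsilon_spec (inhabits 0%nat) (fun n => P n /\ forall m, P m -> (n <= m)%nat)).
  exact (least_exists P inhabited).
Qed.

Lemma nat_floor_exists (N : nat) (u : R) :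
  0 <= u <= INR N -> exists i, (i <= N)%nat /\ INR i <= u < INR i + 1.
Proof.
  induction N as [|N IH]; intros [u_ge0 u_le].
  - exists 0%nat. simpl in *. split; [lia | lra].
  - rewrite S_INR in u_le. destruct (Rle_dec u (INR N)) as [le_N | gt_N].
    + destruct (IH (conj u_ge0 le_N)) as [i [Hi Hu]]. exists i. split; [lia | lra].
    + destruct (Req_dec u (INR N + 1)) as [E | NE].
      * exists (S N). rewrite S_INR. split; [lia | lra].
      * exists N. split; [lia | lra].
Qed.

Section WordMetric.
Variables (G : Group) (A : Type) (pi : A -> G).

Lemma eval_app (u v : word A) : eval pi (u ++ v) = gmul (eval pi u) (eval pi v).
Proof.
  induction u as [|l u IH]; simpl.
  - rewrite gmul1. reflexivity.
  - rewrite IH, gmulA. reflexivity.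
Qed.

Definition winv (w : word A) : word A := rev (map (fun l => (fst l, negb (snd l))) w).

Lemma eval_winv (w : word A) : eval pi (winv w) = ginv (eval pi w).
Proof.
  unfold winv. induction w as [|[a b] w IH]; simpl.
  - apply (gmul_cancel G gone). rewrite gmulrV, gmul1. reflexivity.
  - rewrite eval_app, IH, ginv_mul. f_equal. simpl. rewrite gmul1r.
    unfold letter_val; destruct b; simpl; [reflexivity | symmetry; apply ginv_inv].
Qed.

Lemma length_winv (w : word A) : length (winv w) = length w.
Proof. unfold winv. rewrite length_rev, length_map. reflexivity. Qed.

Hypothesis hgen : generates pi.

Let wdist_inhabited (x y : G) :
  exists n, exists w : word A, length w = n /\ gmul x (eval pi w) = y.
Proof.
  destruct (hgen (gmul (ginv x) y)) as [w Hw].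
  exists (length w), w. split; [reflexivity |]. rewrite Hw. apply gmulKV.
Qed.

Lemma wdist_spec (x y : G) :
  exists w : word A, length w = wdist pi x y /\ gmul x (eval pi w) = y.
Proof. apply (least_spec _ (wdist_inhabited x y)). Qed.

Lemma wdist_le (x y : G) (w : word A) :
  gmul x (eval pi w) = y -> (wdist pi x y <= length w)%nat.
Proof. intro E. apply (least_spec _ (wdist_inhabited x y)). exists w. auto. Qed.

Lemma wdist_refl (x : G) : wdist pi x x = 0%nat.
Proof.
  assert (le0 := wdist_le x x nil). simpl in le0. rewrite gmul1r in le0.
  specialize (le0 eq_refl). lia.
Qed.

Lemma wdist_sym (x y : G) : wdist pi x y = wdist pi y x.
Proof.
  enough (sym_le : forall x y, (wdist pi y x <= wdist pi x y)%nat)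
    by (apply Nat.le_antisymm; apply sym_le).
  clear x y. intros x y. destruct (wdist_spec x y) as [w [Lw Ew]].
  rewrite <- Lw, <- (length_winv w). apply wdist_le.
  rewrite eval_winv, <- Ew, <- gmulA, gmulrV. apply gmul1r.
Qed.

Lemma wdist_triangle (x y z : G) : (wdist pi x z <= wdist pi x y + wdist pi y z)%nat.
Proof.
  destruct (wdist_spec x y) as [u [Lu Eu]], (wdist_spec y z) as [v [Lv Ev]].
  rewrite <- Lu, <- Lv, <- length_app. apply wdist_le.
  rewrite eval_app, gmulA, Eu, Ev. reflexivity.
Qed.

Lemma wdist_mull (k x y : G) : wdist pi (gmul k x) (gmul k y) = wdist pi x y.
Proof.
  enough (mull_le : forall k x y, (wdist pi (gmul k x) (gmul k y) <= wdist pi x y)%nat).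
  { apply Nat.le_antisymm; [apply mull_le |].
    assert (le := mull_le (ginv k) (gmul k x) (gmul k y)). rewrite !gmulK in le. exact le. }
  clear k x y. intros k x y. destruct (wdist_spec x y) as [w [Lw Ew]].
  rewrite <- Lw. apply wdist_le. rewrite <- gmulA, Ew. reflexivity.
Qed.

Lemma wdist_geodesic_prefix (x y : G) (w : word A) (i : nat) :
  length w = wdist pi x y -> gmul x (eval pi w) = y -> (i <= length w)%nat ->
  wdist pi x (gmul x (eval pi (firstn i w))) = i /\
  wdist pi (gmul x (eval pi (firstn i w))) y = (length w - i)%nat.
Proof.
  intros Lw Ew Hi.
  assert (to_prefix := wdist_le x (gmul x (eval pi (firstn i w))) (firstn i w) eq_refl).
  assert (from_prefix := wdist_le (gmul x (eval pi (firstn i w))) y (skipn i w)).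
  rewrite <- gmulA, <- eval_app, firstn_skipn in from_prefix.
  specialize (from_prefix Ew).
  rewrite length_firstn in to_prefix. rewrite length_skipn in from_prefix.
  assert (tri := wdist_triangle x (gmul x (eval pi (firstn i w))) y). lia.
Qed.

Definition dG (x y : G) : R := INR (wdist pi x y).

Lemma dG_sym (x y : G) : dG x y = dG y x.
Proof. unfold dG. rewrite wdist_sym. reflexivity. Qed.

Lemma dG_triangle (x y z : G) : dG x z <= dG x y + dG y z.
Proof. unfold dG. rewrite <- plus_INR. apply le_INR, wdist_triangle. Qed.

Lemma dG_mull (k x y : G) : dG (gmul k x) (gmul k y) = dG x y.
Proof. unfold dG. rewrite wdist_mull. reflexivity. Qed.

End WordMetric.

Arguments dG {G A} pi x y.

Section CosetMetric.
Variables (G : Group) (A : Type) (pi : A -> G) (H : G -> Prop).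
Hypothesis hgen : generates pi.
Hypothesis hH : is_subgroup G H.

Let H1 : H gone. Proof. apply hH. Qed.
Let Hmul x y : H x -> H y -> H (gmul x y). Proof. apply hH. Qed.
Let Hinv x : H x -> H (ginv x). Proof. apply hH. Qed.

Let vdistY_inhabited (x y : G) :
  exists n, exists w : word A, length w = n /\ same_coset H (gmul x (eval pi w)) y.
Proof.
  destruct (wdist_spec G A pi hgen x y) as [w [_ Ew]].
  exists (length w), w. split; [reflexivity |]. unfold same_coset. rewrite Ew, gmulrV. exact H1.
Qed.

Lemma vdistY_le (x y k : G) : H k -> (vdistY pi H x y <= wdist pi x (gmul k y))%nat.
Proof.
  intro Hk. destruct (wdist_spec G A pi hgen x (gmul k y)) as [w [Lw Ew]].
  rewrite <- Lw. apply (least_spec _ (vdistY_inhabited x y)).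
  exists w. split; [reflexivity |]. unfold same_coset.
  rewrite Ew, <- gmulA, gmulrV, gmul1r. exact Hk.
Qed.

Lemma vdistY_attained (x y : G) : exists k, H k /\ wdist pi x (gmul k y) = vdistY pi H x y.
Proof.
  destruct (least_spec _ (vdistY_inhabited x y)) as [[w [Lw Ew]] _].
  exists (gmul (gmul x (eval pi w)) (ginv y)). split; [exact Ew |].
  apply Nat.le_antisymm; [| apply vdistY_le, Ew].
  fold (vdistY pi H x y) in Lw. rewrite <- Lw. apply (wdist_le G A pi hgen).
  rewrite <- gmulA, gmulV, gmul1r. reflexivity.
Qed.

Definition dcos (x y : G) : R := INR (vdistY pi H x y).

Lemma dcos_nonneg (x y : G) : 0 <= dcos x y.
Proof. apply pos_INR. Qed.

Lemma dcos_le_dG_coset (x y k : G) : H k -> dcos x y <= dG pi x (gmul k y).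
Proof. intro Hk. apply le_INR, vdistY_le, Hk. Qed.

Lemma dcos_le_dG (x y : G) : dcos x y <= dG pi x y.
Proof. rewrite <- (gmul1 _ y) at 2. apply dcos_le_dG_coset, H1. Qed.

Lemma dcos_attained (x y : G) : exists k, H k /\ dG pi x (gmul k y) = dcos x y.
Proof.
  destruct (vdistY_attained x y) as [k [Hk E]].
  exists k. split; [exact Hk |]. unfold dG, dcos. rewrite E. reflexivity.
Qed.

Lemma dcos_sym (x y : G) : dcos x y = dcos y x.
Proof.
  enough (sym_le : forall x y, dcos y x <= dcos x y) by (apply Rle_antisym; apply sym_le).
  clear x y. intros x y. destruct (dcos_attained x y) as [k [Hk <-]].
  rewrite dG_sym, <- (dG_mull G A pi hgen (ginv k)), gmulK by exact hgen.
  apply dcos_le_dG_coset, Hinv, Hk.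
Qed.

Lemma dcos_triangle (x y z : G) : dcos x z <= dcos x y + dcos y z.
Proof.
  destruct (dcos_attained x y) as [k1 [Hk1 <-]], (dcos_attained y z) as [k2 [Hk2 <-]].
  rewrite <- (dG_mull G A pi hgen k1 y).
  apply Rle_trans with (dG pi x (gmul (gmul k1 k2) z)).
  - apply dcos_le_dG_coset, Hmul; assumption.
  - rewrite <- gmulA. apply dG_triangle, hgen.
Qed.

Lemma dcos_mull (k x y : G) : H k -> dcos (gmul k x) y = dcos x y.
Proof.
  enough (mull_le : forall k x y, H k -> dcos (gmul k x) y <= dcos x y).
  { intro Hk. apply Rle_antisym; [apply mull_le, Hk |].
    rewrite <- (gmulK G k x) at 1. apply mull_le, Hinv, Hk. }
  clear k x y. intros k x y Hk. destruct (dcos_attained x y) as [k1 [Hk1 <-]].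
  rewrite <- (dG_mull G A pi hgen k), gmulA.
  apply dcos_le_dG_coset, Hmul; assumption.
Qed.

Lemma dcos_mulr (k x y : G) : H k -> dcos x (gmul k y) = dcos x y.
Proof. intro Hk. rewrite dcos_sym, dcos_mull, dcos_sym by exact Hk. reflexivity. Qed.

Lemma dcos_same_coset (x y : G) : same_coset H x y -> dcos x y = 0.
Proof.
  intro Hxy. apply Rle_antisym; [| apply dcos_nonneg].
  assert (le := dcos_le_dG_coset x y _ Hxy).
  rewrite <- gmulA, gmulV, gmul1r in le. unfold dG in le.
  rewrite (wdist_refl G A pi hgen) in le. exact le.
Qed.

Lemma dcos_refl (x : G) : dcos x x = 0.
Proof. apply dcos_same_coset. unfold same_coset. rewrite gmulrV. exact H1. Qed.

Lemma dcos_edge (g : G) (a : A) : dcos g (gmul g (pi a)) <= 1.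
Proof.
  eapply Rle_trans; [apply dcos_le_dG |]. unfold dG. change 1 with (INR 1).
  apply le_INR, (wdist_le G A pi hgen _ _ ((a, true) :: nil)).
  simpl. unfold letter_val. simpl. rewrite gmul1r. reflexivity.
Qed.

End CosetMetric.

Arguments dcos {G A} pi H x y.

Section SimplicialMetric.
Variables (G : Group) (A : Type) (pi : A -> G) (H : G -> Prop).
Hypothesis hgen : generates pi.
Hypothesis hH : is_subgroup G H.

Definition cell (p : YPt G A) : G := match p with YV g => g | YE g _ _ => g end.

Definition near_cell (p : YPt G A) (e : G * R) : Prop :=
  0 <= snd e <= 1 /\ dcos pi H (cell p) (fst e) <= 1.

Lemma ends_near_cell (p : YPt G A) :
  near_cell p (fst (ends pi p)) /\ near_cell p (snd (ends pi p)).
Proof.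
  unfold near_cell. destruct p as [g | g a [t Ht]]; simpl;
    rewrite (dcos_refl G A pi H hgen hH).
  - repeat split; lra.
  - assert (edge := dcos_edge G A pi H hgen hH g a). repeat split; lra.
Qed.

Lemma vertex_route_ends (p q : YPt G A) : vertex_route pi H p q =
  Rmin (Rmin (route pi H (fst (ends pi p)) (fst (ends pi q)))
             (route pi H (fst (ends pi p)) (snd (ends pi q))))
       (Rmin (route pi H (snd (ends pi p)) (fst (ends pi q)))
             (route pi H (snd (ends pi p)) (snd (ends pi q)))).
Proof. unfold vertex_route. destruct (ends pi p), (ends pi q). reflexivity. Qed.

Lemma route_lower_bound (p q : YPt G A) (e f : G * R) :
  near_cell p e -> near_cell q f -> dcos pi H (cell p) (cell q) - 2 <= route pi H e f.
Proof.
  intros [He Hpe] [Hf Hqf]. unfold route.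
  change (INR (vdistY pi H (fst e) (fst f))) with (dcos pi H (fst e) (fst f)).
  assert (tri1 := dcos_triangle G A pi H hgen hH (cell p) (fst e) (cell q)).
  assert (tri2 := dcos_triangle G A pi H hgen hH (fst e) (fst f) (cell q)).
  rewrite (dcos_sym G A pi H hgen hH (fst f)) in tri2. lra.
Qed.

Lemma dY_le_dcos_cell (p q : YPt G A) : dY pi H p q <= dcos pi H (cell p) (cell q) + 2.
Proof.
  apply Rle_trans with (vertex_route pi H p q).
  { unfold dY. destruct (excluded_middle_informative _); [apply Rmin_l | apply Rle_refl]. }
  rewrite vertex_route_ends.
  eapply Rle_trans; [apply Rmin_l |]. eapply Rle_trans; [apply Rmin_l |].
  destruct (ends_near_cell p) as [[Hp _] _], (ends_near_cell q) as [[Hq _] _].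
  unfold route. replace (fst (fst (ends pi p))) with (cell p) by (destruct p; reflexivity).
  replace (fst (fst (ends pi q))) with (cell q) by (destruct q; reflexivity).
  unfold dcos in *. lra.
Qed.

Lemma dcos_cell_le_dY (p q : YPt G A) : dcos pi H (cell p) (cell q) <= dY pi H p q + 2.
Proof.
  assert (route_bound : dcos pi H (cell p) (cell q) - 2 <= vertex_route pi H p q).
  { rewrite vertex_route_ends.
    destruct (ends_near_cell p) as [Ep1 Ep2], (ends_near_cell q) as [Eq1 Eq2].
    repeat apply Rmin_glb; apply route_lower_bound; assumption. }
  unfold dY. destruct (excluded_middle_informative _) as [Hedge | _]; [| lra].
  destruct p as [g | g a t], q as [g' | g' a' t']; simpl in Hedge; try tauto.
  destruct Hedge as [_ Hcoset]. simpl cell in *.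
  rewrite (dcos_same_coset G A pi H hgen hH g g' Hcoset) in *.
  assert (abs_ge0 := Rabs_pos (param (YE g a t) - param (YE g' a' t'))).
  enough (-2 <= Rmin (vertex_route pi H (YE g a t) (YE g' a' t'))
                     (Rabs (param (YE g a t) - param (YE g' a' t')))) by lra.
  apply Rmin_glb; lra.
Qed.

Lemma geodesic_segment_dist (gam : R -> YPt G A) (L : R) : geodesic_segment pi H gam L ->
  forall s t, 0 <= s <= t -> t <= L -> dY pi H (gam s) (gam t) = t - s.
Proof.
  intros [_ geo] s t st tL. rewrite geo by lra.
  rewrite Rabs_minus_sym, Rabs_pos_eq; lra.
Qed.

End SimplicialMetric.

Arguments cell {G A} p.
Section FourPointCondition.
Variables (T : Type) (d : T -> T -> R) (delta : R).

Definition gromov (x y w : T) : R := (d x w + d y w - d x y) / 2.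

Hypothesis dsym : forall x y, d x y = d y x.
Hypothesis dtri : forall x y z, d x z <= d x y + d y z.
Hypothesis delta_ge0 : 0 <= delta.
Hypothesis four_point : forall x y z w,
  gromov x y w + delta >= gromov x z w \/ gromov x y w + delta >= gromov z y w.

(* [a] and [b] stand for nearest points of [y] and [y'] on a quasiconvex set: the last two
   hypotheses say that geodesics from [y] to [b] and from [y'] to [a] pass near [a] and [b]. *)
Lemma gromov_projection_bound (x y y' a b : T) (K L : R) : 0 <= K ->
  d b y' = d a y -> d y b >= d a y + d a b - 2 * K -> d y' a >= d a y + d a b - 2 * K ->
  L <= d a y -> 2 * L <= d y y' -> L <= gromov x y' y -> gromov x a y >= L - K - 2 * delta.
Proof.
  intros K_ge0 Eb shadow shadow' La Lyy' Lx.
  pose proof (dsym y y'). pose proof (dsym y a). pose proof (dsym y' b). pose proof (dsym a b).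
  assert (near_a : gromov y' a y >= L - K - delta).
  { assert (t1 := dtri y' b a). assert (t2 := dtri y y' b).
    destruct (four_point y b y' a) as [F | F]; unfold gromov in *; lra. }
  destruct (four_point x a y' y) as [F | F]; unfold gromov in *; lra.
Qed.

Lemma near_geodesics_fellow_travel (x y y' m m' : T) (c : R) : 0 <= c ->
  d x m + d m y <= d x y + c -> d x m' + d m' y' <= d x y' + c ->
  -c <= d x m - d x m' <= c -> d x m <= gromov y y' x + 4 * c ->
  d m m' <= 10 * (c + delta).
Proof.
  intros c_ge0 near_m near_m' same_dist before_branch.
  assert (t1 := dtri x m y). assert (t2 := dtri x m' y').
  pose proof (dsym x y). pose proof (dsym x y'). pose proof (dsym x m). pose proof (dsym x m').
  pose proof (dsym y y'). pose proof (dsym y' m').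
  destruct (four_point m m' y x) as [F1 | F1], (four_point y m' y' x) as [F2 | F2];
    unfold gromov in *; lra.
Qed.

(* [m] and [m'] lie near geodesics from [x] to [y] and to [y'], at about the same distance
   from [x]; [n] is the image of [m'] under an isometry carrying [y'] to [y] and [b] to [a]. *)
Section Trichotomy.
Variables (x y y' a b m m' n : T) (c K : R).
Hypothesis c_ge0 : 0 <= c.
Hypothesis K_ge0 : 0 <= K.
Hypothesis same_dist_to_projection : d b y' = d a y.
Hypothesis shadow : d y b >= d a y + d a b - 2 * K.
Hypothesis shadow' : d y' a >= d a y + d a b - 2 * K.
Hypothesis near_m : d x m + d m y <= d x y + c.
Hypothesis near_m' : d x m' + d m' y' <= d x y' + c.
Hypothesis same_dist_m : -c <= d x m - d x m' <= c.
Hypothesis same_dist_y : -c <= d x y - d x y' <= c.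
Hypothesis translate_y : d n y = d m' y'.
Hypothesis translate_a : d n a = d m' b.

Let projection_bound_y (L : R) : L <= d a y -> L <= gromov x y' y - c / 2 ->
  gromov x a y >= L - K - 2 * delta.
Proof.
  intros La Lx. pose proof (dsym x y). pose proof (dsym x y'). pose proof (dsym y y').
  apply (gromov_projection_bound x y y' a b K L); unfold gromov in *; lra.
Qed.

Let projection_bound_y' (L : R) : L <= d a y -> L <= gromov x y y' - c / 2 ->
  gromov x b y' >= L - K - 2 * delta.
Proof.
  intros La Lx. pose proof (dsym x y). pose proof (dsym x y'). pose proof (dsym y y').
  pose proof (dsym a b). pose proof (dsym y a). pose proof (dsym y' b).
  apply (gromov_projection_bound x y' y b a K L); unfold gromov in *; lra.
Qed.

Let after_branch_near_translate : gromov y y' x + 4 * c < d x m -> d m y <= d a y + 4 * c ->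
  d m n <= 100 * (c + K + delta).
Proof.
  intros after_branch m_close.
  assert (t1 := dtri x m y). assert (t2 := dtri x m' y').
  pose proof (dsym x y). pose proof (dsym x y'). pose proof (dsym x m). pose proof (dsym x m').
  pose proof (dsym y y'). pose proof (dsym y a). pose proof (dsym a m). pose proof (dsym a n).
  pose proof (dsym y' b). pose proof (dsym b m').
  assert (Gm : gromov m a y >= d m y - 4 * c - K - 3 * delta).
  { assert (Q := projection_bound_y (d m y - 4 * c) ltac:(lra)
                                    ltac:(unfold gromov in *; lra)).
    destruct (four_point m a x y) as [F | F]; unfold gromov in *; lra. }
  assert (Gm' : gromov m' b y' >= d m' y' - 7 * c - K - 3 * delta).
  { assert (Q := projection_bound_y' (d m' y' - 7 * c) ltac:(unfold gromov in *; lra)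
                                     ltac:(unfold gromov in *; lra)).
    destruct (four_point m' b x y') as [F | F]; unfold gromov in *; lra. }
  destruct (four_point m n a y) as [F | F]; unfold gromov in *; lra.
Qed.

Let after_branch_near_projections : gromov y y' x + 4 * c < d x m -> d a y + 4 * c < d m y ->
  gromov a b m <= 100 * (c + K + delta) /\ gromov a b m' <= 100 * (c + K + delta).
Proof.
  intros after_branch m_far.
  assert (t1 := dtri x m y). assert (t2 := dtri x m' y').
  pose proof (dsym x y). pose proof (dsym x y'). pose proof (dsym x m). pose proof (dsym x m').
  pose proof (dsym y y'). pose proof (dsym y a). pose proof (dsym y b). pose proof (dsym y' a).
  pose proof (dsym y' b). pose proof (dsym a b). pose proof (dsym a m). pose proof (dsym a m').
  pose proof (dsym b m). pose proof (dsym b m').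
  assert (Gma : gromov m a y >= d a y - K - 3 * delta).
  { assert (Q := projection_bound_y (d a y) ltac:(lra) ltac:(unfold gromov in *; lra)).
    destruct (four_point m a x y) as [F | F]; unfold gromov in *; lra. }
  assert (Gmb : gromov m b y >= d m y - c / 2 - 2 * delta).
  { assert (u1 := dtri y b y').
    assert (Q : gromov x b y >= d m y - delta).
    { destruct (four_point x b y' y) as [F | F]; unfold gromov in *; lra. }
    destruct (four_point m b x y) as [F | F]; unfold gromov in *; lra. }
  assert (Gm'b : gromov m' b y' >= d a y - K - 3 * delta).
  { assert (Q := projection_bound_y' (d a y) ltac:(lra) ltac:(unfold gromov in *; lra)).
    destruct (four_point m' b x y') as [F | F]; unfold gromov in *; lra. }
  assert (Gm'a : gromov m' a y' >= d m' y' - c / 2 - 2 * delta).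
  { assert (u1 := dtri y' a y).
    assert (Q : gromov x a y' >= d m' y' - delta).
    { destruct (four_point x a y y') as [F | F]; unfold gromov in *; lra. }
    destruct (four_point m' a x y') as [F | F]; unfold gromov in *; lra. }
  assert (u1 := dtri y a b). assert (u2 := dtri y' b a).
  unfold gromov in *; split; lra.
Qed.

Lemma near_geodesic_trichotomy :
  d m m' <= 100 * (c + K + delta) \/ d m n <= 100 * (c + K + delta) \/
  (gromov a b m <= 100 * (c + K + delta) /\ gromov a b m' <= 100 * (c + K + delta)).
Proof.
  destruct (Rle_lt_dec (d x m) (gromov y y' x + 4 * c)) as [before_branch | after_branch].
  { left. assert (fellow := near_geodesics_fellow_travel x y y' m m' c c_ge0
      near_m near_m' same_dist_m before_branch). lra. }
  right. destruct (Rle_lt_dec (d m y) (d a y + 4 * c)) as [m_close | m_far].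
  - left. apply after_branch_near_translate; assumption.
  - right. apply after_branch_near_projections; assumption.
Qed.

End Trichotomy.

End FourPointCondition.

Lemma word_hyperbolic_four_point (G : Group) (A : Type) (pi : A -> G) (delta : R) :
  (forall x y z w : G,
     gromov_prod pi x y w >= Rmin (gromov_prod pi x z w) (gromov_prod pi z y w) - delta) ->
  forall x y z w : G,
    gromov G (dG pi) x y w + Rmax delta 0 >= gromov G (dG pi) x z w \/
    gromov G (dG pi) x y w + Rmax delta 0 >= gromov G (dG pi) z y w.
Proof.
  intros hyp x y z w. specialize (hyp x y z w).
  change (gromov G (dG pi)) with (gromov_prod pi).
  assert (max_ge := Rmax_l delta 0).
  destruct (Rle_dec (gromov_prod pi x z w) (gromov_prod pi z y w)).
  - rewrite Rmin_left in hyp by lra. left. lra.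
  - rewrite Rmin_right in hyp by lra. right. lra.
Qed.

Section Quasiconvexity.
Variables (G : Group) (A : Type) (pi : A -> G) (H : G -> Prop).
Hypothesis hgen : generates pi.
Hypothesis hH : is_subgroup G H.
Variable delta : R.
Hypothesis delta_ge0 : 0 <= delta.
Hypothesis four_point : forall x y z w : G,
  gromov G (dG pi) x y w + delta >= gromov G (dG pi) x z w \/
  gromov G (dG pi) x y w + delta >= gromov G (dG pi) z y w.
Variable C : R.
Hypothesis C_ge0 : 0 <= C.
Hypothesis hqc : forall (h1 h2 : G) (w : word A), H h1 -> H h2 ->
  gmul h1 (eval pi w) = h2 -> length w = wdist pi h1 h2 ->
  forall i : nat, (i <= length w)%nat ->
    exists h : G, H h /\ INR (wdist pi (gmul h1 (eval pi (firstn i w))) h) <= C.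

Local Notation d := (dG pi).
Local Notation gp := (gromov G (dG pi)).

Let Hmul x y : H x -> H y -> H (gmul x y). Proof. apply hH. Qed.
Let Hinv x : H x -> H (ginv x). Proof. apply hH. Qed.
Let d_sym : forall x y, d x y = d y x := dG_sym G A pi hgen.
Let d_triangle : forall x y z, d x z <= d x y + d y z := dG_triangle G A pi hgen.
Let d_mull : forall k x y, d (gmul k x) (gmul k y) = d x y := dG_mull G A pi hgen.
Local Notation dH := (dcos pi H).
Let dH_sym : forall x y, dH x y = dH y x := dcos_sym G A pi H hgen hH.
Let dH_triangle : forall x y z, dH x z <= dH x y + dH y z := dcos_triangle G A pi H hgen hH.
Let dH_mull : forall k x y, H k -> dH (gmul k x) y = dH x y := dcos_mull G A pi H hgen hH.
Let dH_mulr : forall k x y, H k -> dH x (gmul k y) = dH x y := dcos_mulr G A pi H hgen hH.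
Let dH_le : forall x y, dH x y <= d x y := dcos_le_dG G A pi H hgen hH.

Definition qc_const : R := 1 + 2 * delta + C.

(* The point of a geodesic [a, b] at distance about (z|b)_a from [a] is near [H] and, by
   thinness, near [z]. *)
Lemma quasiconvex_near_point (a b z : G) : H a -> H b ->
  exists k, H k /\ d z k <= d a z - gp z b a + qc_const.
Proof.
  intros Ha Hb. destruct (wdist_spec G A pi hgen a b) as [w [Lw Ew]].
  pose proof (d_triangle z a b). pose proof (d_triangle z b a).
  pose proof (d_sym z a). pose proof (d_sym a b). pose proof (d_sym z b).
  destruct (nat_floor_exists (length w) (gp z b a)) as [i [Hi Hu]].
  { rewrite Lw. change (INR (wdist pi a b)) with (d a b). unfold gromov. lra. }
  destruct (hqc a b w Ha Hb Ew Lw i Hi) as [k [Hk Dk]].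
  destruct (wdist_geodesic_prefix G A pi hgen a b w i Lw Ew Hi) as [P1 P2].
  set (zi := gmul a (eval pi (firstn i w))) in *.
  exists k. split; [exact Hk |].
  assert (E1 : d a zi = INR i) by (unfold dG; rewrite P1; reflexivity).
  assert (E2 : d zi b = d a b - INR i) by (unfold dG; rewrite P2, minus_INR, Lw; auto).
  pose proof (d_triangle z zi k). pose proof (d_sym a zi). pose proof (d_sym zi b).
  change (INR (wdist pi zi k)) with (d zi k) in Dk.
  destruct (four_point z zi b a) as [F | F]; unfold gromov, qc_const in *; lra.
Qed.

Lemma nearest_point_exists (z : G) : exists p, H p /\ forall k, H k -> d p z <= d k z.
Proof.
  destruct (least_exists (fun n => exists k, H k /\ wdist pi k z = n)) as [n [[p [Hp E]] least_n]].
  { exists (wdist pi gone z), gone. split; [apply hH | reflexivity]. }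
  exists p. split; [exact Hp |]. intros k Hk.
  unfold dG. apply le_INR. rewrite E. apply least_n. exists k. auto.
Qed.

Lemma nearest_point_shadow (p b z : G) : H p -> H b -> (forall k, H k -> d p z <= d k z) ->
  d z b >= d p z + d p b - 2 * qc_const.
Proof.
  intros Hp Hb nearest. destruct (quasiconvex_near_point p b z Hp Hb) as [k [Hk Dk]].
  pose proof (nearest k Hk). pose proof (d_sym k z). pose proof (d_sym p z).
  pose proof (d_sym b p). pose proof (d_sym z b).
  unfold gromov, qc_const in *. lra.
Qed.

Lemma small_gromov_near_subgroup (p b z : G) (K : R) : H p -> H b -> gp p b z <= K ->
  exists k, H k /\ d z k <= K + qc_const.
Proof.
  intros Hp Hb small. destruct (quasiconvex_near_point p b z Hp Hb) as [k [Hk Dk]].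
  exists k. split; [exact Hk |].
  pose proof (d_sym p z). pose proof (d_sym b z). pose proof (d_sym b p).
  unfold gromov, qc_const in *. lra.
Qed.

Definition coset_fellow_const (c : R) : R := 2 * (100 * (c + qc_const + delta) + qc_const).

Lemma dcos_near_geodesic_points (x y m m' k : G) (c : R) : 0 <= c -> H k ->
  d x m + d m y <= d x y + c -> d x m' + d m' (gmul k y) <= d x (gmul k y) + c ->
  -c <= d x m - d x m' <= c -> -c <= d x y - d x (gmul k y) <= c ->
  dH m m' <= coset_fellow_const c.
Proof.
  intros c_ge0 Hk near_m near_m' same_dist_m same_dist_y.
  destruct (nearest_point_exists y) as [p [Hp nearest_p]].
  set (b := gmul k p). assert (Hb : H b) by (apply Hmul; assumption).
  assert (nearest_b : forall k', H k' -> d b (gmul k y) <= d k' (gmul k y)).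
  { intros k' Hk'. unfold b. rewrite d_mull, <- (gmulKV G k k'), d_mull.
    apply nearest_p, Hmul; [apply Hinv |]; assumption. }
  assert (shadow := nearest_point_shadow p b y Hp Hb nearest_p).
  assert (shadow' := nearest_point_shadow b p (gmul k y) Hb Hp nearest_b).
  assert (Eb : d b (gmul k y) = d p y) by apply d_mull.
  rewrite Eb, (d_sym b p) in shadow'.
  set (n := gmul (ginv k) m').
  assert (translate_y : d n y = d m' (gmul k y)).
  { rewrite <- (d_mull k). unfold n. rewrite gmulKV. reflexivity. }
  assert (translate_a : d n p = d m' b).
  { rewrite <- (d_mull k). unfold n. rewrite gmulKV. reflexivity. }
  assert (qc_ge0 : 0 <= qc_const) by (unfold qc_const; lra).
  assert (dH_mn : dH m n = dH m m') by (apply dH_mulr, Hinv, Hk).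
  unfold coset_fellow_const.
  destruct (near_geodesic_trichotomy G d delta d_sym d_triangle delta_ge0 four_point
      x y (gmul k y) p b m m' n c qc_const c_ge0 qc_ge0 Eb shadow shadow'
      near_m near_m' same_dist_m same_dist_y translate_y translate_a)
    as [close | [close | [near_m_pb near_m'_pb]]].
  - pose proof (dH_le m m'). lra.
  - pose proof (dH_le m n). lra.
  - destruct (small_gromov_near_subgroup p b m _ Hp Hb near_m_pb) as [k1 [Hk1 D1]].
    destruct (small_gromov_near_subgroup p b m' _ Hp Hb near_m'_pb) as [k2 [Hk2 D2]].
    assert (same_coset_k : dH k1 k2 = 0).
    { apply (dcos_same_coset G A pi H hgen hH).
      unfold same_coset. apply Hmul; [| apply Hinv]; assumption. }
    pose proof (dH_triangle m k1 m'). pose proof (dH_triangle k1 k2 m').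
    pose proof (dH_le m k1). pose proof (dH_le k2 m'). pose proof (d_sym k2 m').
    lra.
Qed.

(* [a], [m], [e] and [a'], [m'], [e'] are the cells of the two sides of a bigon at times
   0, s, L and 0, t, M. After translating by elements of H, the two sides lift to
   near-geodesics in G from [x] to [y] and to [k y]; the slack 30 absorbs the additive error
   of at most 2 made at each cell. *)
Lemma aligned_lifts (a m e a' m' e' : G) (s t L M : R) :
  s <= L -> (t = s \/ (t = M /\ M <= s)) ->
  dH a m <= s + 2 -> dH m e <= L - s + 2 -> L - 2 <= dH a e ->
  dH a' m' <= t + 2 -> dH m' e' <= M - t + 2 -> M - 2 <= dH a' e' ->
  dH a a' <= 2 -> dH e e' <= 2 ->
  exists x y k m2, H k /\ dH m m2 = dH m m' /\
    d x m + d m y <= d x y + 30 /\ d x m2 + d m2 (gmul k y) <= d x (gmul k y) + 30 /\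
    -30 <= d x m - d x m2 <= 30 /\ -30 <= d x y - d x (gmul k y) <= 30.
Proof.
  intros s_le t_s am me ae am' me' ae' aa' ee'.
  assert (L_le : L <= M + 10).
  { pose proof (dH_triangle a a' e). pose proof (dH_triangle a' e' e).
    pose proof (dH_triangle a' m' e'). pose proof (dH_sym e e'). lra. }
  assert (M_le : M <= L + 10).
  { pose proof (dH_triangle a' a e'). pose proof (dH_triangle a e e').
    pose proof (dH_triangle a m e). pose proof (dH_sym a a'). lra. }
  destruct (dcos_attained G A pi H hgen hH m a) as [kA [HkA xm]].
  destruct (dcos_attained G A pi H hgen hH m e) as [kE [HkE my]].
  destruct (dcos_attained G A pi H hgen hH m' a') as [kA' [HkA' x'm']].
  destruct (dcos_attained G A pi H hgen hH m' e') as [kE' [HkE' m'y']].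
  set (x := gmul kA a) in *. set (y := gmul kE e) in *.
  set (x' := gmul kA' a') in *. set (y' := gmul kE' e') in *.
  destruct (dcos_attained G A pi H hgen hH x x') as [k0 [Hk0 xx']].
  set (m2 := gmul k0 m'). set (y2 := gmul k0 y').
  destruct (dcos_attained G A pi H hgen hH y2 y) as [k1 [Hk1 y2y]].
  exists x, y, k1, m2. split; [exact Hk1 |]. split; [apply dH_mulr, Hk0 |].
  assert (E_aa' : dH x x' = dH a a') by (unfold x, x'; rewrite dH_mull, dH_mulr; auto).
  assert (E_ee' : dH y2 y = dH e' e) by (unfold y2, y', y; rewrite !dH_mull, dH_mulr; auto).
  assert (E_ae : dH x y = dH a e) by (unfold x, y; rewrite dH_mull, dH_mulr; auto).
  assert (E_ae3 : dH x (gmul k1 y) = dH a e) by (rewrite dH_mulr; auto).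
  assert (E_m2 : d (gmul k0 x') m2 = d m' x') by (unfold m2; rewrite d_mull; apply d_sym).
  assert (E_y2 : d m2 y2 = d m' y') by (unfold m2, y2; apply d_mull).
  pose proof (dH_le x y). pose proof (dH_le x (gmul k1 y)).
  pose proof (d_triangle x (gmul k0 x') m2). pose proof (d_triangle m2 y2 (gmul k1 y)).
  pose proof (d_triangle x m y). pose proof (d_triangle x m2 (gmul k1 y)).
  pose proof (d_sym x m). pose proof (dH_sym m a). pose proof (dH_sym m' a').
  pose proof (dH_sym e e').
  repeat split; lra.
Qed.

Lemma bigon_side_thin (alpha beta : R -> YPt G A) (L M : R) :
  geodesic_segment pi H alpha L -> geodesic_segment pi H beta M ->
  dH (cell (alpha 0)) (cell (beta 0)) <= 2 -> dH (cell (alpha L)) (cell (beta M)) <= 2 ->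
  in_nbhd pi H (coset_fellow_const 30 + 2) alpha L beta M.
Proof.
  intros geo_a geo_b start_close end_close s Hs.
  assert (L_ge0 := proj1 geo_a). assert (M_ge0 := proj1 geo_b).
  set (t := Rmin s M).
  assert (t_bounds : 0 <= t <= M /\ t <= s)
    by (unfold t; repeat split; [apply Rmin_glb | apply Rmin_r | apply Rmin_l]; lra).
  assert (t_s : t = s \/ (t = M /\ M <= s)).
  { unfold t. destruct (Rle_dec s M); [left; apply Rmin_left | right; split; [apply Rmin_right |]];
      lra. }
  exists t. split; [lra |].
  assert (dist_a := geodesic_segment_dist G A pi H alpha L geo_a).
  assert (dist_b := geodesic_segment_dist G A pi H beta M geo_b).
  assert (up := dY_le_dcos_cell G A pi H hgen hH).
  assert (low := dcos_cell_le_dY G A pi H hgen hH).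
  pose proof (low (alpha 0) (alpha s)). pose proof (low (alpha s) (alpha L)).
  pose proof (up (alpha 0) (alpha L)).
  pose proof (low (beta 0) (beta t)). pose proof (low (beta t) (beta M)).
  pose proof (up (beta 0) (beta M)).
  pose proof (dist_a 0 s ltac:(lra) ltac:(lra)). pose proof (dist_a s L ltac:(lra) ltac:(lra)).
  pose proof (dist_a 0 L ltac:(lra) ltac:(lra)). pose proof (dist_b 0 t ltac:(lra) ltac:(lra)).
  pose proof (dist_b t M ltac:(lra) ltac:(lra)). pose proof (dist_b 0 M ltac:(lra) ltac:(lra)).
  destruct (aligned_lifts (cell (alpha 0)) (cell (alpha s)) (cell (alpha L))
              (cell (beta 0)) (cell (beta t)) (cell (beta M)) s t L M)
    as [x [y [k [m2 [Hk [E_m2 [near_m [near_m2 [same_m same_y]]]]]]]]]; try lra.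
  assert (fellow := dcos_near_geodesic_points x y (cell (alpha s)) m2 k 30 ltac:(lra) Hk
                      near_m near_m2 same_m same_y).
  pose proof (up (alpha s) (beta t)). lra.
Qed.

End Quasiconvexity.

Theorem theorem3p4 (G : Group) (A : Type) (pi : A -> G) (H : G -> Prop)
  (hA : finite_type A) (hgen : generates pi)
  (hhyp : word_hyperbolic pi)
  (hH : is_subgroup G H) (hqc : quasiconvex pi H) :
  exists delta' : R, 0 <= delta' /\
    forall (alpha beta : R -> YPt G A) (L M : R),
      geodesic_segment pi H alpha L -> geodesic_segment pi H beta M ->
      dY pi H (alpha 0) (beta 0) = 0 -> dY pi H (alpha L) (beta M) = 0 ->
      in_nbhd pi H delta' alpha L beta M /\ in_nbhd pi H delta' beta M alpha L.
Proof.
  destruct hhyp as [delta hyp_delta], hqc as [C [C_pos qc]].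
  assert (four_point := word_hyperbolic_four_point G A pi delta hyp_delta).
  assert (delta_ge0 : 0 <= Rmax delta 0) by apply Rmax_r.
  assert (C_ge0 : 0 <= C) by lra.
  assert (thin := bigon_side_thin G A pi H hgen hH _ delta_ge0 four_point C C_ge0 qc).
  exists (coset_fellow_const (Rmax delta 0) C 30 + 2). split.
  { unfold coset_fellow_const, qc_const. lra. }
  intros alpha beta L M geo_a geo_b meet_start meet_end.
  assert (low := dcos_cell_le_dY G A pi H hgen hH).
  assert (sym := dcos_sym G A pi H hgen hH).
  pose proof (low (alpha 0) (beta 0)). pose proof (low (alpha L) (beta M)).
  pose proof (sym (cell (alpha 0)) (cell (beta 0))).
  pose proof (sym (cell (alpha L)) (cell (beta M))).
  split; apply thin; auto; lra.
Qed.
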